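(* Let $\phi_1,\dots,\phi_n:\mathbb{R}^d\to\mathbb{R}$ be differentiable and let $P(w)=\frac1n\sum_{i=1}^n\phi_i(w)$. Suppose $P$ is $H$-strongly convex with $H>0$ and $(1/\gamma)$-smooth, and let $w^*$ be a minimizer of $P$. Run the stratified-sampling minibatch SGD algorithm described in the context with constant step size $\eta_t=\eta\in\big(0,\frac{2}{H+1/\gamma}\big]$. Let $\alpha(\eta)=1-\frac{2\eta H/\gamma}{H+1/\gamma}$. Then $\alpha(\eta)\in\big[\big(\frac{H-1/\gamma}{H+1/\gamma}\big)^2,1\big)$, and for every $T\ge1$, $$\mathbb{E}P(w_{T+1})-P(w^* )\le\frac{\alpha(\eta)^T}{2\gamma}\|w^*\|^2+\frac{\eta^2}{2\gamma}\sum_{t=1}^T\alpha(\eta)^{T-t}\,\mathbb{E}V_t,$$ where $V_t$ is the variance of the stochastic gradient $g_t$ defined in the context.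
   Context: $\|\cdot\|$ denotes the Euclidean norm. A differentiable $\phi:\mathbb{R}^d\to\mathbb{R}$ is $H$-strongly convex ($H\ge0$) if $\phi(u)\ge\phi(v)+\nabla\phi(v)^\top(u-v)+\frac H2\|u-v\|^2$ for all $u,v$, and $(1/\gamma)$-smooth ($\gamma>0$) if $\phi(u)\le\phi(v)+\nabla\phi(v)^\top(u-v)+\frac1{2\gamma}\|u-v\|^2$ for all $u,v$. Algorithm (SGD with stratified sampling): start with $w_1=0$. At each step $t=1,2,\dots$, a partition of $[n]=\{1,\dots,n\}$ into nonempty disjoint sets $C_1^t,\dots,C_k^t$ with $|C_i^t|=n_i^t$, and positive integers $b_1^t,\dots,b_k^t$, are chosen (possibly depending on the past, but before the step-$t$ sampling). Then, independently across $i$ and of the past given these choices, for each $i$ a multiset $B_i^t$ of $b_i^t$ indices is drawn i.i.d. uniformly (with replacement) from $C_i^t$. Set $g_t=\frac1n\sum_{i=1}^k\frac{n_i^t}{b_i^t}\sum_{s\in B_i^t}\nabla\phi_s(w_t)$ and $w_{t+1}=w_t-\eta_t g_t$. The variance is $V_t=\mathbb{E}\big[\|g_t-\nabla P(w_t)\|^2\,\big|\,\text{past}\big]$ (note $\mathbb{E}[g_t\mid\text{past}]=\nabla P(w_t)$). *)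

From HB Require Import structures.
From mathcomp Require Import all_boot all_order all_algebra.
From mathcomp Require Import all_classical all_reals all_analysis.
Set Implicit Arguments. Unset Strict Implicit. Unset Printing Implicit Defensive.
Import Order.TTheory GRing.Theory Num.Theory.
Import numFieldNormedType.Exports.
Local Open Scope ring_scope.

Section Defs.
Variables (R : realType) (d n : nat).

Definition dotv (u v : 'rV[R]_d) : R := \sum_(j < d) u 0 j * v 0 j.
Definition sqnorm (u : 'rV[R]_d) : R := dotv u u.

Definition has_gradient (f : 'rV[R]_d -> R) (gf : 'rV[R]_d -> 'rV[R]_d) :=
  forall w, differentiable f w /\ forall h, 'd f w h = dotv (gf w) h.

Definition Pobj (phi : 'I_n -> 'rV[R]_d -> R) (w : 'rV[R]_d) : R :=
  n%:R^-1 * \sum_(i < n) phi i w.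
Definition gradP (gphi : 'I_n -> 'rV[R]_d -> 'rV[R]_d) (w : 'rV[R]_d) : 'rV[R]_d :=
  n%:R^-1 *: \sum_(i < n) gphi i w.

Definition strongly_convex (H : R) (f : 'rV[R]_d -> R) (gf : 'rV[R]_d -> 'rV[R]_d) :=
  forall u v, f v + dotv (gf v) (u - v) + H / 2 * sqnorm (u - v) <= f u.
Definition smooth (gam : R) (f : 'rV[R]_d -> R) (gf : 'rV[R]_d -> 'rV[R]_d) :=
  forall u v, f u <= f v + dotv (gf v) (u - v) + 1 / (2 * gam) * sqnorm (u - v).

(* A choice at step t: the list of pairs (C_i^t, b_i^t), i = 1..k. *)
Definition choice_t := seq (finset.set_type 'I_n * nat).
(* Realized sample at step t: for each block i, the sequence B_i^t of drawn indices. *)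
Definition sample_t := seq (seq 'I_n).

Definition valid_choice (ch : choice_t) : bool :=
  all (fun p : finset.set_type 'I_n * nat => (0 < #|p.1|)%N && (0 < p.2)%N) ch &&
  [forall x : 'I_n, count (fun p : finset.set_type 'I_n * nat => x \in p.1) ch == 1%N].

Definition stoch_grad (gphi : 'I_n -> 'rV[R]_d -> 'rV[R]_d) (ch : choice_t)
  (smp : sample_t) (w : 'rV[R]_d) : 'rV[R]_d :=
  n%:R^-1 *: \sum_(pq <- zip ch smp)
     ((#|pq.1.1|%:R / (pq.1.2)%:R) *: \sum_(s <- pq.2) gphi s w).

Definition strategy := seq sample_t -> choice_t.

(* Iterates: traj h = w_{t} where h is the history of the first t-1 samples;
   w_1 = 0, w_{t+1} = w_t - eta g_t. *)
Fixpoint traj_aux (gphi : 'I_n -> 'rV[R]_d -> 'rV[R]_d) (strat : strategy) (eta : R)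
  (pre rest : seq sample_t) (w : 'rV[R]_d) : 'rV[R]_d :=
  match rest with
  | [::] => w
  | s :: rest' => traj_aux gphi strat eta (rcons pre s) rest'
                    (w - eta *: stoch_grad gphi (strat pre) s w)
  end.
Definition traj gphi strat eta (h : seq sample_t) := traj_aux gphi strat eta [::] h 0.

(* Expectation over b i.i.d. uniform draws from C. *)
Fixpoint avg_tuple (C : finset.set_type 'I_n) (b : nat) (G : seq 'I_n -> R) : R :=
  match b with
  | 0 => G [::]
  | b'.+1 => #|C|%:R^-1 * \sum_(s in C) avg_tuple C b' (fun r => G (s :: r))
  end.
(* Expectation over the step sample, independent across blocks. *)
Fixpoint avg_sample (ch : choice_t) (G : sample_t -> R) : R :=
  match ch with
  | [::] => G [::]
  | p :: ch' => avg_tuple p.1 p.2 (fun r => avg_sample ch' (fun rs => G (r :: rs)))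
  end.
(* Expectation of F(history after m more steps), starting from history h. *)
Fixpoint Ehist (strat : strategy) (m : nat) (F : seq sample_t -> R) (h : seq sample_t) : R :=
  match m with
  | 0 => F h
  | m'.+1 => avg_sample (strat h) (fun s => Ehist strat m' F (rcons h s))
  end.

(* V_t as a function of the past h (of length t-1) *)
Definition Vcond gphi strat eta (h : seq sample_t) : R :=
  let w := traj gphi strat eta h in
  avg_sample (strat h) (fun s => sqnorm (stoch_grad gphi (strat h) s w - gradP gphi w)).

(* E P(w_{T+1}) *)
Definition EP phi gphi strat eta (T : nat) : R :=
  Ehist strat T (fun h => Pobj phi (traj gphi strat eta h)) [::].
(* E V_t, t >= 1 *)
Definition EV gphi strat eta (t : nat) : R :=
  Ehist strat t.-1 (Vcond gphi strat eta) [::].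

End Defs.

(* One step of SGD moves w_t - w* to (w_t - w* - eta grad P(w_t)) - eta (g_t - grad P(w_t)).
   The stochastic gradient is unbiased, so the cross term vanishes in expectation and
   E|w_{t+1} - w*|^2 = |w_t - w* - eta grad P(w_t)|^2 + eta^2 V_t.  Co-coercivity of the
   gradient of a strongly convex smooth function makes the deterministic gradient step a
   contraction by the factor alpha, and unrolling the resulting linear recursion bounds
   E|w_{T+1} - w*|^2; smoothness at w*, where the gradient vanishes, turns that into the
   bound on the expected excess objective. *)
From HB Require Import structures.
From mathcomp Require Import all_boot all_order all_algebra.
From mathcomp Require Import all_classical all_reals all_analysis.
From mathcomp Require Import ring lra.
Import Order.TTheory GRing.Theory Num.Theory.
Import numFieldNormedType.Exports.
Local Open Scope ring_scope.
Set Implicit Arguments. Unset Strict Implicit. Unset Printing Implicit Defensive.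

Section InnerProduct.
Variables (R : realType) (d : nat).
Implicit Types (u v w : 'rV[R]_d).

Lemma dotvC u v : dotv u v = dotv v u.
Proof. by apply: eq_bigr => j _; rewrite mulrC. Qed.

Lemma dotvDl u w v : dotv (u + w) v = dotv u v + dotv w v.
Proof. by rewrite /dotv -big_split; apply: eq_bigr => j _; rewrite mxE mulrDl. Qed.

Lemma dotvZl a u v : dotv (a *: u) v = a * dotv u v.
Proof. by rewrite /dotv mulr_sumr; apply: eq_bigr => j _; rewrite mxE mulrA. Qed.

Lemma dotvNl u v : dotv (- u) v = - dotv u v.
Proof. by rewrite -scaleN1r dotvZl mulN1r. Qed.

Lemma dotvBl u w v : dotv (u - w) v = dotv u v - dotv w v.
Proof. by rewrite dotvDl dotvNl. Qed.

Lemma dotv0l v : dotv 0 v = 0.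
Proof. by rewrite /dotv big1 // => j _; rewrite mxE mul0r. Qed.

Lemma dotvDr u w v : dotv v (u + w) = dotv v u + dotv v w.
Proof. by rewrite dotvC dotvDl !(dotvC v). Qed.

Lemma dotvZr a u v : dotv v (a *: u) = a * dotv v u.
Proof. by rewrite dotvC dotvZl dotvC. Qed.

Lemma dotvNr u v : dotv v (- u) = - dotv v u.
Proof. by rewrite dotvC dotvNl dotvC. Qed.

Lemma dotvBr u w v : dotv v (u - w) = dotv v u - dotv v w.
Proof. by rewrite dotvDr dotvNr. Qed.

Lemma dotv_suml (I : Type) (r : seq I) (P : pred I) (F : I -> 'rV[R]_d) v :
  dotv (\sum_(i <- r | P i) F i) v = \sum_(i <- r | P i) dotv (F i) v.
Proof. by apply: (big_morph (fun u => dotv u v)) => [x y|]; rewrite ?dotvDl ?dotv0l. Qed.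

Lemma sqnorm_ge0 u : 0 <= sqnorm u.
Proof. by apply: sumr_ge0 => j _; rewrite -expr2 sqr_ge0. Qed.

Lemma sqnorm_eq0 u : sqnorm u = 0 -> u = 0.
Proof.
move=> u0; apply/matrixP => i j; rewrite mxE (ord1 i).
have sq_ge0 (k : 'I_d) : true -> 0 <= u 0 k * u 0 k by rewrite -expr2 sqr_ge0.
by move: (psumr_eq0P sq_ge0 u0 (i := j) isT) => /eqP; rewrite mulf_eq0 orbb => /eqP.
Qed.

Lemma sqnormN u : sqnorm (- u) = sqnorm u.
Proof. by rewrite /sqnorm dotvNl dotvNr opprK. Qed.

Lemma sqnormZ a u : sqnorm (a *: u) = a ^+ 2 * sqnorm u.
Proof. rewrite /sqnorm dotvZl dotvZr; ring. Qed.

Lemma sqnormB u v : sqnorm (u - v) = sqnorm u - 2 * dotv u v + sqnorm v.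
Proof. rewrite /sqnorm dotvBl !dotvBr (dotvC v u); ring. Qed.

Lemma sqnormBZ u a v :
  sqnorm (u - a *: v) = sqnorm u - 2 * a * dotv v u + a ^+ 2 * sqnorm v.
Proof. rewrite sqnormB sqnormZ dotvZr (dotvC u v); ring. Qed.

End InnerProduct.

Section Cocoercivity.
Variables (R : realType) (d : nat) (g : 'rV[R]_d -> R) (gg : 'rV[R]_d -> 'rV[R]_d) (M : R).
Hypothesis g_convex : forall u v, g v + dotv (gg v) (u - v) <= g u.
Hypothesis g_smooth :
  forall u v, g u <= g v + dotv (gg v) (u - v) + M / 2 * sqnorm (u - v).

Lemma convex_smooth_gap x y s :
  (s - M * s ^+ 2 / 2) * sqnorm (gg y - gg x) <= g y - g x - dotv (gg x) (y - x).
Proof.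
set D := gg y - gg x.
have conv_x := g_convex (y - s *: D) x.
have smooth_y := g_smooth (y - s *: D) y.
have shift_x : y - s *: D - x = (y - x) - s *: D by rewrite addrAC.
have shift_y : y - s *: D - y = - (s *: D) by rewrite addrAC subrr add0r.
rewrite shift_x shift_y sqnormN sqnormZ dotvBr dotvNr !dotvZr in conv_x smooth_y.
have sqnormD : sqnorm D = dotv (gg y) D - dotv (gg x) D by rewrite /sqnorm {1}/D dotvBl.
rewrite sqnormD; nra.
Qed.

Lemma cocoercive_step x y s :
  (2 * s - M * s ^+ 2) * sqnorm (gg y - gg x) <= dotv (gg y - gg x) (y - x).
Proof.
have gap_xy := convex_smooth_gap x y s.
have gap_yx := convex_smooth_gap y x s.
rewrite -[gg x - gg y]opprB sqnormN in gap_yx.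
rewrite !dotvBl !dotvBr in gap_xy gap_yx *.
lra.
Qed.

(* For [M <= 0] the factor [2 s - M s^2] is unbounded in [s], which forces [gg y = gg x]. *)
Lemma cocoercive x y : sqnorm (gg y - gg x) <= M * dotv (gg y - gg x) (y - x).
Proof.
set D := gg y - gg x; set c := dotv D (y - x).
have step := cocoercive_step x y.
have D_ge0 := sqnorm_ge0 D.
have [M_gt0 | M_le0] := ltrP 0 M.
  have := ler_wpM2l (ltW M_gt0) (step M^-1).
  have -> : 2 * M^-1 - M * M^-1 ^+ 2 = M^-1 by field; exact: lt0r_neq0.
  by rewrite mulrA mulfV ?mul1r // lt0r_neq0.
have c_ge0 : 0 <= c by have := step 0; rewrite mulr0 expr0n /= mulr0 subr0 mul0r.
suff D0 : sqnorm D = 0 by rewrite D0 /c (sqnorm_eq0 D0) dotv0l mulr0.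
apply/eqP; rewrite eq_le D_ge0 andbT leNgt; apply/negP => D_gt0.
pose s := (c + 1) / (2 * sqnorm D).
have s_ge0 : 0 <= s by rewrite divr_ge0 // ?addr_ge0 // mulr_ge0.
have sD : 2 * s * sqnorm D = c + 1 by rewrite /s; field; rewrite lt0r_neq0.
have : 0 <= - M * (s ^+ 2 * sqnorm D).
  by apply: mulr_ge0; [rewrite oppr_ge0 | apply: mulr_ge0; rewrite ?sqr_ge0 ?ltW].
have := step s; rewrite -/D -/c; lra.
Qed.

End Cocoercivity.

Section StronglyConvexSmooth.
Variables (R : realType) (d : nat) (f : 'rV[R]_d -> R) (gf : 'rV[R]_d -> 'rV[R]_d).
Variables (H gam : R).
Hypothesis gam_gt0 : 0 < gam.
Hypothesis f_sc : strongly_convex H f gf.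
Hypothesis f_smooth : smooth gam f gf.

(* Apply [cocoercive] to [f - H/2 |.|^2], which is convex and [(1/gam - H)]-smooth. *)
Lemma strongly_convex_cocoercive x y :
  H / gam * sqnorm (y - x) + sqnorm (gf y - gf x) <=
  (H + 1 / gam) * dotv (gf y - gf x) (y - x).
Proof.
pose g u := f u - H / 2 * sqnorm u.
pose gg u := gf u - H *: u.
have g_convex u v : g v + dotv (gg v) (u - v) <= g u.
  have := f_sc u v; rewrite /g /gg sqnormB dotvBl dotvZl !dotvBr (dotvC v u) /sqnorm.
  lra.
have g_smooth u v :
    g u <= g v + dotv (gg v) (u - v) + (gam^-1 - H) / 2 * sqnorm (u - v).
  have := f_smooth u v; rewrite /g /gg !sqnormB dotvBl dotvZl !dotvBr (dotvC v u).
  have -> : 1 / (2 * gam) = gam^-1 / 2 by field; exact: lt0r_neq0.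
  rewrite /sqnorm; lra.
have := cocoercive g_convex g_smooth x y.
have -> : gg y - gg x = (gf y - gf x) - H *: (y - x).
  by apply/matrixP => i j; rewrite /gg !mxE; ring.
rewrite sqnormBZ (dotvBl (gf y - gf x)) dotvZl (dotvC (y - x)) /sqnorm.
lra.
Qed.

Lemma smooth_grad_eq0_at_min ws : (forall w, f ws <= f w) -> gf ws = 0.
Proof.
move=> ws_min; apply: sqnorm_eq0; set p := gf ws.
have := ws_min (ws - gam *: p).
have := f_smooth (ws - gam *: p) ws.
have -> : ws - gam *: p - ws = - (gam *: p) by rewrite addrAC subrr add0r.
rewrite sqnormN sqnormZ dotvNr dotvZr.
have -> : 1 / (2 * gam) * (gam ^+ 2 * sqnorm p) = gam / 2 * sqnorm p.
  by field; exact: lt0r_neq0.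
have p_ge0 := sqnorm_ge0 p.
move=> smooth_step min_step; have : gam * sqnorm p <= 0.
  by rewrite /sqnorm in smooth_step p_ge0 *; lra.
by rewrite pmulr_rle0 // => p_le0; apply/eqP; rewrite eq_le p_le0 p_ge0.
Qed.

Definition sgd_rate (eta : R) := 1 - (2 * eta * H / gam) / (H + 1 / gam).

Lemma sgd_rate_bounds eta : 0 < H -> 0 < eta -> eta <= 2 / (H + 1 / gam) ->
  ((H - 1 / gam) / (H + 1 / gam)) ^+ 2 <= sgd_rate eta /\ sgd_rate eta < 1.
Proof.
move=> H_gt0 eta_gt0 eta_le.
pose K := H + gam^-1.
have K_gt0 : 0 < K by rewrite addr_gt0 // invr_gt0.
have gam_neq0 : gam != 0 by rewrite lt0r_neq0.
have HgamS_neq0 : H * gam + 1 != 0 by rewrite lt0r_neq0 // addr_gt0 ?mulr_gt0.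
pose c := 2 * H * gam^-1 / K ^+ 2.
have c_gt0 : 0 < c by rewrite divr_gt0 ?exprn_gt0 // !mulr_gt0 // invr_gt0.
have -> : sgd_rate eta = 1 - eta * K * c.
  by rewrite /sgd_rate /c /K; field; rewrite gam_neq0 HgamS_neq0.
have -> : ((H - 1 / gam) / (H + 1 / gam)) ^+ 2 = 1 - 2 * c.
  by rewrite /c /K div1r; field; rewrite gam_neq0 HgamS_neq0.
have etaK_le2 : eta * K <= 2.
  by move: (ler_wpM2r (ltW K_gt0) eta_le); rewrite div1r mulfVK // lt0r_neq0.
have := ler_wpM2r (ltW c_gt0) etaK_le2.
have : 0 < eta * K * c by do 2 apply: mulr_gt0 => //.
lra.
Qed.

Lemma grad_step_contraction ws w eta : 0 <= H -> gf ws = 0 -> 0 <= eta ->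
  eta <= 2 / (H + 1 / gam) ->
  sqnorm (w - ws - eta *: gf w) <= sgd_rate eta * sqnorm (w - ws).
Proof.
move=> H_ge0 gf_ws eta_ge0 eta_le.
pose K := H + gam^-1.
have K_gt0 : 0 < K by rewrite ltr_wpDl // invr_gt0.
have etaK_le2 : eta * K <= 2.
  by move: (ler_wpM2r (ltW K_gt0) eta_le); rewrite div1r mulfVK // lt0r_neq0.
have := strongly_convex_cocoercive ws w; rewrite gf_ws subr0 div1r -/K.
rewrite sqnormBZ.
set X := sqnorm (w - ws); set P2 := sqnorm (gf w); set I := dotv (gf w) (w - ws).
move=> coco; have P2_ge0 : 0 <= P2 := sqnorm_ge0 (gf w).
have coco_eta := ler_wpM2l eta_ge0 coco.
have slack : 0 <= eta * P2 * (2 - eta * K) by rewrite !mulr_ge0 // subr_ge0.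
rewrite -(ler_pM2l K_gt0).
have -> : K * (sgd_rate eta * X) = K * X - 2 * eta * (H / gam) * X.
  have HgamS_gt0 : 0 < H * gam + 1 by rewrite ltr_wpDl // mulr_ge0 // ltW.
  by rewrite /sgd_rate /K; field; rewrite !lt0r_neq0.
rewrite /K in coco_eta slack *; nra.
Qed.

End StronglyConvexSmooth.

Lemma linear_recursion_bound (R : realFieldType) (a : R) (D e : nat -> R) :
  0 <= a -> (forall m, D m.+1 <= a * D m + e m.+1) ->
  forall T, D T <= a ^+ T * D 0 + \sum_(1 <= t < T.+1) a ^+ (T - t) * e t.
Proof.
move=> a_ge0 rec; elim=> [|m IH]; first by rewrite big_geq // addr0 expr0 mul1r.
apply: le_trans (rec m) _.
rewrite big_nat_recr //= subnn expr0 mul1r.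
have -> : \sum_(1 <= t < m.+1) a ^+ (m.+1 - t) * e t
    = a * \sum_(1 <= t < m.+1) a ^+ (m - t) * e t.
  rewrite mulr_sumr; apply: eq_big_nat => t /andP[_ t_le].
  by rewrite subSn // exprS mulrA.
have := ler_wpM2l a_ge0 IH; rewrite [a ^+ m.+1]exprS; lra.
Qed.

Section UniformSampling.
Variables (R : realType) (n : nat).
Implicit Types (C : {set 'I_n}) (b : nat) (F G : seq 'I_n -> R).

Lemma avg_tupleD C b F G :
  avg_tuple C b (fun r => F r + G r) = avg_tuple C b F + avg_tuple C b G.
Proof.
elim: b F G => [|b IH] F G //=.
rewrite -mulrDr -big_split; congr (_ * _); apply: eq_bigr => s _.
exact: (IH (fun r => F (s :: r)) (fun r => G (s :: r))).
Qed.

Lemma avg_tupleZ C b c F : avg_tuple C b (fun r => c * F r) = c * avg_tuple C b F.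
Proof.
elim: b F => [|b IH] F //=.
rewrite [RHS]mulrCA [in RHS]mulr_sumr; congr (_ * _); apply: eq_bigr => s _.
exact: (IH (fun r => F (s :: r))).
Qed.

Lemma avg_tuple_cst C b (c : R) : (0 < #|C|)%N -> avg_tuple C b (fun _ => c) = c.
Proof.
move=> C_gt0; elim: b => [|b IH] //=.
rewrite (eq_bigr (fun _ => c)) ?sumr_const; last by move=> s _; exact: IH.
by rewrite -[c *+ _]mulr_natr mulrCA mulVf ?mulr1 // pnatr_eq0 -lt0n.
Qed.

Lemma avg_tuple_le C b F G :
  (forall r, F r <= G r) -> avg_tuple C b F <= avg_tuple C b G.
Proof.
elim: b F G => [|b IH] F G FG //=.
rewrite ler_wpM2l ?invr_ge0 ?ler0n //.
by apply: ler_sum => s _; exact: IH.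
Qed.

Lemma avg_tuple_sum C b (a : 'I_n -> R) : (0 < #|C|)%N ->
  avg_tuple C b (fun r => \sum_(s <- r) a s) = b%:R * (#|C|%:R^-1 * \sum_(s in C) a s).
Proof.
move=> C_gt0; elim: b => [|b IH] /=; first by rewrite big_nil mul0r.
have cons_avg s : avg_tuple C b (fun r => \sum_(s0 <- s :: r) a s0)
    = a s + b%:R * (#|C|%:R^-1 * \sum_(s in C) a s).
  under eq_fun do rewrite big_cons.
  by rewrite avg_tupleD avg_tuple_cst // IH.
rewrite (eq_bigr _ (fun s _ => cons_avg s)) big_split /= sumr_const -[_ *+ #|C|]mulr_natr.
have C_neq0 : (#|C|%:R : R) != 0 by rewrite pnatr_eq0 -lt0n.
by rewrite -addn1 natrD; field.
Qed.

Definition nonempty_blocks (ch : choice_t n) :=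
  all (fun p : {set 'I_n} * nat => (0 < #|p.1|)%N) ch.

Lemma avg_sampleD ch (F G : sample_t n -> R) :
  avg_sample ch (fun s => F s + G s) = avg_sample ch F + avg_sample ch G.
Proof.
elim: ch F G => [|p ch IH] F G //=.
rewrite -avg_tupleD; congr avg_tuple; apply/funext => r.
exact: (IH (fun rs => F (r :: rs)) (fun rs => G (r :: rs))).
Qed.

Lemma avg_sampleZ ch c (F : sample_t n -> R) :
  avg_sample ch (fun s => c * F s) = c * avg_sample ch F.
Proof.
elim: ch F => [|p ch IH] F //=.
rewrite -avg_tupleZ; congr avg_tuple; apply/funext => r.
exact: (IH (fun rs => F (r :: rs))).
Qed.

Lemma avg_sample_cst ch (c : R) : nonempty_blocks ch -> avg_sample ch (fun _ => c) = c.
Proof.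
elim: ch => [|p ch IH] //= /andP[p_gt0 ch_gt0].
by under eq_fun do rewrite IH //; exact: avg_tuple_cst.
Qed.

Lemma avg_sample_le ch (F G : sample_t n -> R) :
  (forall s, F s <= G s) -> avg_sample ch F <= avg_sample ch G.
Proof.
elim: ch F G => [|p ch IH] F G FG //=.
by apply: avg_tuple_le => r; exact: IH.
Qed.

Lemma avg_sample_sum_blocks ch (f : {set 'I_n} * nat -> seq 'I_n -> R) :
  nonempty_blocks ch ->
  avg_sample ch (fun smp => \sum_(pq <- zip ch smp) f pq.1 pq.2)
  = \sum_(p <- ch) avg_tuple p.1 p.2 (f p).
Proof.
elim: ch => [|p ch IH] /=; first by rewrite !big_nil.
move=> /andP[p_gt0 ch_gt0]; rewrite big_cons.
have split_head r : avg_sample ch (fun rs => \sum_(pq <- zip (p :: ch) (r :: rs)) f pq.1 pq.2)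
    = f p r + \sum_(p <- ch) avg_tuple p.1 p.2 (f p).
  under eq_fun do rewrite /= big_cons.
  by rewrite avg_sampleD avg_sample_cst // IH.
by under eq_fun do rewrite split_head; rewrite avg_tupleD avg_tuple_cst.
Qed.

End UniformSampling.

Section StratifiedGradient.
Variables (R : realType) (d n : nat) (gphi : 'I_n -> 'rV[R]_d -> 'rV[R]_d).
Variables (ch : choice_t n).
Hypothesis ch_valid : valid_choice ch.

Lemma valid_nonempty_blocks : nonempty_blocks ch.
Proof. by case/andP: ch_valid => /allP blocks _; apply/allP => p /blocks /andP[]. Qed.

Lemma valid_batch_gt0 p : p \in ch -> (0 < p.2)%N.
Proof. by case/andP: ch_valid => /allP blocks _ /blocks /andP[]. Qed.

Lemma sum_over_blocks (a : 'I_n -> R) : \sum_(p <- ch) \sum_(s in p.1) a s = \sum_s a s.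
Proof.
under eq_bigr do rewrite big_mkcond.
rewrite exchange_big; apply: eq_bigr => s _.
case/andP: ch_valid => _ /forallP /(_ s) /eqP s_once.
by rewrite -big_mkcond big_const_seq s_once /= addr0.
Qed.

Lemma stoch_grad_unbiased w v :
  avg_sample ch (fun smp => dotv (stoch_grad gphi ch smp w) v) = dotv (gradP gphi w) v.
Proof.
pose a s := dotv (gphi s w) v.
pose f (p : {set 'I_n} * nat) r := #|p.1|%:R / p.2%:R * \sum_(s <- r) a s.
have -> : (fun smp => dotv (stoch_grad gphi ch smp w) v)
    = fun smp => n%:R^-1 * \sum_(pq <- zip ch smp) f pq.1 pq.2.
  apply/funext => smp; rewrite /stoch_grad dotvZl dotv_suml; congr (_ * _).
  by apply: eq_bigr => pq _; rewrite dotvZl dotv_suml.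
rewrite avg_sampleZ avg_sample_sum_blocks ?valid_nonempty_blocks //.
rewrite /gradP dotvZl dotv_suml -(sum_over_blocks a); congr (_ * _).
rewrite !big_seq; apply: eq_bigr => p p_in.
have C_gt0 : (0 < #|p.1|)%N by move/allP: valid_nonempty_blocks => /(_ p p_in).
rewrite avg_tupleZ avg_tuple_sum //; field.
by rewrite !pnatr_eq0 -!lt0n valid_batch_gt0 ?C_gt0.
Qed.

Lemma avg_sqnorm_sgd_step w ws eta :
  avg_sample ch (fun smp => sqnorm (w - eta *: stoch_grad gphi ch smp w - ws))
  = sqnorm (w - ws - eta *: gradP gphi w)
    + eta ^+ 2 * avg_sample ch (fun smp => sqnorm (stoch_grad gphi ch smp w - gradP gphi w)).
Proof.
set p := gradP gphi w; set y := w - ws - eta *: p.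
have -> : (fun smp => sqnorm (w - eta *: stoch_grad gphi ch smp w - ws)) = fun smp =>
    (sqnorm y + 2 * eta * dotv p y) + (- 2 * eta) * dotv (stoch_grad gphi ch smp w) y
    + eta ^+ 2 * sqnorm (stoch_grad gphi ch smp w - p).
  apply/funext => smp.
  have -> : w - eta *: stoch_grad gphi ch smp w - ws
      = y - eta *: (stoch_grad gphi ch smp w - p).
    by apply/matrixP => i j; rewrite /y !mxE; ring.
  by rewrite sqnormBZ dotvBl; ring.
rewrite !avg_sampleD !avg_sampleZ !avg_sample_cst ?valid_nonempty_blocks //.
rewrite stoch_grad_unbiased -/p; ring.
Qed.

End StratifiedGradient.

Section History.
Variables (R : realType) (d n : nat) (gphi : 'I_n -> 'rV[R]_d -> 'rV[R]_d).
Variable strat : strategy n.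
Hypothesis strat_valid : forall h, valid_choice (strat h).
Implicit Types (F G : seq (sample_t n) -> R).

Lemma EhistD m F G h :
  Ehist strat m (fun h => F h + G h) h = Ehist strat m F h + Ehist strat m G h.
Proof.
elim: m h => [|m IH] h //=.
by rewrite -avg_sampleD; under eq_fun do rewrite IH.
Qed.

Lemma EhistZ m c F h : Ehist strat m (fun h => c * F h) h = c * Ehist strat m F h.
Proof.
elim: m h => [|m IH] h //=.
by rewrite -avg_sampleZ; under eq_fun do rewrite IH.
Qed.

Lemma Ehist_cst m (c : R) h : Ehist strat m (fun _ => c) h = c.
Proof.
elim: m h => [|m IH] h //=.
by under eq_fun do rewrite IH; rewrite avg_sample_cst // valid_nonempty_blocks.
Qed.

Lemma Ehist_le m F G h : (forall h, F h <= G h) -> Ehist strat m F h <= Ehist strat m G h.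
Proof.
elim: m h => [|m IH] h FG //=.
by apply: avg_sample_le => s; apply: IH.
Qed.

Lemma EhistSr m F h :
  Ehist strat m.+1 F h =
  Ehist strat m (fun h' => avg_sample (strat h') (fun s => F (rcons h' s))) h.
Proof.
elim: m h => [|m IH] h //.
exact: (congr1 (avg_sample (strat h)) (funext (fun s => IH (rcons h s)))).
Qed.

Lemma traj_aux_rcons eta pre rest s w :
  traj_aux gphi strat eta pre (rcons rest s) w =
  traj_aux gphi strat eta pre rest w - eta *:
    stoch_grad gphi (strat (pre ++ rest)) s (traj_aux gphi strat eta pre rest w).
Proof.
elim: rest pre w => [|r rest IH] pre w /=; first by rewrite cats0.
by rewrite IH cat_rcons.
Qed.

Lemma traj_rcons eta h s :
  traj gphi strat eta (rcons h s) =
  traj gphi strat eta h - eta *: stoch_grad gphi (strat h) s (traj gphi strat eta h).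
Proof. exact: traj_aux_rcons. Qed.

End History.

Section SGD.
Variables (R : realType) (d n : nat).
Variables (phi : 'I_n -> 'rV[R]_d -> R) (gphi : 'I_n -> 'rV[R]_d -> 'rV[R]_d).
Variables (H gam : R) (wstar : 'rV[R]_d).
Hypothesis (H_ge0 : 0 <= H) (gam_gt0 : 0 < gam).
Hypothesis P_sc : strongly_convex H (Pobj phi) (gradP gphi).
Hypothesis P_smooth : smooth gam (Pobj phi) (gradP gphi).
Hypothesis wstar_min : forall w, Pobj phi wstar <= Pobj phi w.
Variables (strat : strategy n) (eta : R).
Hypothesis strat_valid : forall h, valid_choice (strat h).
Hypothesis (eta_ge0 : 0 <= eta) (eta_le : eta <= 2 / (H + 1 / gam)).

Definition Esqdist (m : nat) : R :=
  Ehist strat m (fun h => sqnorm (traj gphi strat eta h - wstar)) [::].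

Lemma Esqdist0 : Esqdist 0 = sqnorm wstar.
Proof. by rewrite /Esqdist /= /traj /= sub0r sqnormN. Qed.

Lemma gradP_wstar : gradP gphi wstar = 0.
Proof. exact: (smooth_grad_eq0_at_min (f := Pobj phi) gam_gt0 P_smooth wstar_min). Qed.

Lemma Esqdist_rec m :
  Esqdist m.+1 <= sgd_rate H gam eta * Esqdist m + eta ^+ 2 * EV gphi strat eta m.+1.
Proof.
rewrite /Esqdist EhistSr /EV /= -!EhistZ -EhistD.
apply: Ehist_le => h; under eq_fun do rewrite traj_rcons.
rewrite avg_sqnorm_sgd_step // lerD2r.
exact: (grad_step_contraction (f := Pobj phi) gam_gt0 P_sc P_smooth _
  H_ge0 gradP_wstar eta_ge0 eta_le).
Qed.

Lemma EP_sub_min_le T :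
  EP phi gphi strat eta T - Pobj phi wstar <= 1 / (2 * gam) * Esqdist T.
Proof.
rewrite lerBlDl /EP /Esqdist -EhistZ -(Ehist_cst strat_valid T (Pobj phi wstar) [::]).
rewrite -EhistD.
apply: Ehist_le => h; have := P_smooth (traj gphi strat eta h) wstar.
by rewrite gradP_wstar dotv0l addr0.
Qed.

End SGD.

Theorem theorem2 (R : realType) (d n : nat) (hn : (0 < n)%N)
  (phi : 'I_n -> 'rV[R]_d -> R) (gphi : 'I_n -> 'rV[R]_d -> 'rV[R]_d)
  (hgrad : forall i, has_gradient (phi i) (gphi i))
  (H gam : R) (hH : 0 < H) (hgam : 0 < gam)
  (hsc : strongly_convex H (Pobj phi) (gradP gphi))
  (hsm : smooth gam (Pobj phi) (gradP gphi))
  (wstar : 'rV[R]_d) (hmin : forall w, Pobj phi wstar <= Pobj phi w)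
  (strat : strategy n) (hstrat : forall h, valid_choice (strat h))
  (eta : R) (heta0 : 0 < eta) (heta1 : eta <= 2 / (H + 1 / gam)) :
  let alpha := 1 - (2 * eta * H / gam) / (H + 1 / gam) in
  ((H - 1 / gam) / (H + 1 / gam)) ^+ 2 <= alpha /\ alpha < 1 /\
  forall T : nat, (1 <= T)%N ->
    EP phi gphi strat eta T - Pobj phi wstar <=
      alpha ^+ T / (2 * gam) * sqnorm wstar +
      eta ^+ 2 / (2 * gam) *
        \sum_(1 <= t < T.+1) alpha ^+ (T - t) * EV gphi strat eta t.
Proof.
move=> alpha; have [alpha_ge alpha_lt1] := sgd_rate_bounds hgam hH heta0 heta1.
do 2 split => //; move=> T _.
have alpha_ge0 : 0 <= alpha := le_trans (sqr_ge0 _) alpha_ge.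
have := linear_recursion_bound (e := fun t => eta ^+ 2 * EV gphi strat eta t) alpha_ge0
  (Esqdist_rec (ltW hH) hgam hsc hsm hmin hstrat (ltW heta0) heta1) T.
have -> : \sum_(1 <= t < T.+1) alpha ^+ (T - t) * (eta ^+ 2 * EV gphi strat eta t)
    = eta ^+ 2 * \sum_(1 <= t < T.+1) alpha ^+ (T - t) * EV gphi strat eta t.
  by rewrite mulr_sumr; apply: eq_bigr => t _; rewrite mulrCA.
rewrite Esqdist0 => dist_bound.
apply: le_trans (EP_sub_min_le hgam hsm hmin eta hstrat T) _.
set S := \sum_(_ <= _ < _) _.
have -> : alpha ^+ T / (2 * gam) * sqnorm wstar + eta ^+ 2 / (2 * gam) * S
    = 1 / (2 * gam) * (alpha ^+ T * sqnorm wstar + eta ^+ 2 * S) by rewrite !div1r; ring.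
by rewrite ler_wpM2l // divr_ge0 // mulr_ge0 // ltW.
Qed.
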